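(* Let $S \cdot I$ be a well-formed instrumented notebook state and let $op$ be any notebook operation ($\textsc{Run}(i)$, $\textsc{Edit}(i,c)$, $\textsc{Insert}(i,c)$, $\textsc{Delete}(i)$ or $\textsc{Move}(s,d)$). If $S \cdot I \xRightarrow{op} S' \cdot I'$ is a transition of the instrumented semantics, then $S' \cdot I'$ is well-formed.
   Context: Locations and stores. $\mathrm{Loc}$ is a set of locations (top-level variable names $x$, and DataFrame columns $d.c$ where $d$ is an immutable DataFrame address and $c$ a column name). $\mathrm{Val}$ is a set of values. A store is a map $\Sigma : \mathrm{Loc} \to \mathrm{Val}$, and $\emptyset$ denotes the empty store. $\mathit{Code}$ and $\mathit{Output}$ are unspecified sets; the output $\bot$ means ''not yet executed''. Cell evaluation. Standard cell evaluation is a given relation (a black box modelling the language runtime) written $c;\Sigma \Downarrow o \cdot \Sigma'$: executing code $c$ in store $\Sigma$ produces output $o$ and resulting store $\Sigma'$. Instrumented cell evaluation $c;\Sigma \Downarrow o \cdot \Sigma' \cdot r \cdot w$ extends it: it holds when $c;\Sigma \Downarrow o\cdot\Sigma'$, $r \subseteq \mathrm{Loc}$ is the set of locations of $\Sigma$ read during the evaluation of $c$, and $w \subseteq \mathrm{Loc}$ is the set of locations where $\Sigma'$ is updated from $\Sigma$. Notation. For a sequence $X = X_1,\dots,X_n$, $X_{i..j}$ is the subsequence $X_i,\dots,X_j$, and $X[i:=v]$ is $X$ with position $i$ replaced by $v$. For a sequence of sets $W$, $\bigcup W_{i..j} = W_i \cup \dots \cup W_j$ (empty if $i>j$). Notebook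 states. A notebook state is $S = (C, O, \Sigma)$ with $C = C_1,\dots,C_n$ cell codes, $O = O_1,\dots,O_n$ cell outputs, and $\Sigma$ the current store. An instrumentation is $I = (T, R, W)$ with tags $T_i \in \{\textsc{clean}, \textsc{stale}\}$, read sets $R_i \subseteq \mathrm{Loc}$ and write sets $W_i \subseteq \mathrm{Loc}$ for $i = 1,\dots,n$. Rerun consistency. $R$ and $W$ are rerun consistent for cell $i$ if all of: (NoReadAndWrite) $R_i \cap W_i = \emptyset$; (WriteAboveRead) $R_i \subseteq \bigcup W_{1..i-1}$; (NoReadAboveWrite) $R_i \cap \bigcup W_{i+1..n} = \emptyset$; (NoWriteBelowRead) $W_i \cap \bigcup R_{1..i-1} = \emptyset$. Staleness predicates. $\textsc{ForwardStale}(R,W,W',i,j)$ holds iff $j > i$ and $(W_i \cup W'_i) \cap (R_j \cup W_j) \neq \emptyset$. $\textsc{LastWriter}(W,i,\ell) = \max\{k < i \mid \ell \in W_k\}$. $\textsc{BackwardStale}(W,W',i,j)$ holds iff $j < i$ and $j = \textsc{LastWriter}(W,i,\ell)$ for some $\ell \in W_i \setminus W'_i$. Instrumented semantics $S\cdot I \xRightarrow{op} S'\cdot I'$: - $\textsc{Run}(i)$: if $S = (C,O,\Sigma)$, $C_i;\Sigma \Downarrow o\cdot\Sigma'\cdot r\cdot w$, $R' = R[i:=r]$, $W' = W[i:=w]$, and $R',W'$ are rerun consistent for $i$, then $(C,O,\Sigma)\cdot(T,R,W) \xRightarrow{\textsc{Run}(i)} (C, O[i:=o], \Sigma')\cdot(T',R',W')$,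 where $T'_j = \textsc{clean}$ if $j = i$; $T'_j = \textsc{stale}$ if $\textsc{ForwardStale}(R,W,W',i,j)$ or $\textsc{BackwardStale}(W,W',i,j)$; and $T'_j = T_j$ otherwise. - $\textsc{Edit}(i,c)$: $C$ becomes $C[i:=c]$; $O$, $\Sigma$, $R$, $W$ unchanged; $T$ becomes $T[i:=\textsc{stale}]$. - $\textsc{Insert}(i,c)$: $C' = C_{1..i-1}, c, C_{i..n}$; $O' = O_{1..i-1}, \bot, O_{i..n}$; $\Sigma$ unchanged; $R' = R_{1..i-1},\emptyset,R_{i..n}$; $W' = W_{1..i-1},\emptyset,W_{i..n}$; $T' = T_{1..i-1},\textsc{stale},T_{i..n}$. - $\textsc{Delete}(i)$: $C' = C_{1..i-1},C_{i+1..n}$; $O' = O_{1..i-1},O_{i+1..n}$; $\Sigma$ unchanged; with $R'' = R[i:=\emptyset]$, $W'' = W[i:=\emptyset]$, let $T''_j = \textsc{stale}$ if $\textsc{ForwardStale}(R,W,W'',i,j)$ or $\textsc{BackwardStale}(W,W'',i,j)$, and $T''_j = T_j$ otherwise; then $R' = R''_{1..i-1},R''_{i+1..n}$, $W' = W''_{1..i-1},W''_{i+1..n}$, $T' = T''_{1..i-1},T''_{i+1..n}$. - $\textsc{Move}(s,d)$: if $s < d$, it is $\textsc{Delete}(s)$ followed by $\textsc{Insert}(d-1, C_s)$; if $s > d$, it is $\textsc{Delete}(s)$ followed by $\textsc{Insert}(d, C_s)$. Well-formedness. $S\cdot I = (C,O,\Sigma)\cdot(T,R,W)$ is well-formed if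 for every $i$ with $T_i = \textsc{clean}$ there exists a store $\Sigma'$ such that (1) $C_i;\Sigma \Downarrow O_i\cdot\Sigma'\cdot R_i\cdot W_i$; (2) $\Sigma$ and $\Sigma'$ agree on every location not in $\bigcup W_{i+1..n}$; (3) $R$ and $W$ are rerun consistent for $i$. *)

(* Sequences X_1..X_n are functions nat -> X together with the
   length n (only positions 1..n are meaningful).  Sets of locations are
   predicates Loc -> Prop. *)
From Stdlib Require Import Arith.
Set Implicit Arguments.

Section Defs.
Variables (Code Output Loc Val : Type).

Definition lset := Loc -> Prop.
Definition store := Loc -> Val.
Definition lempty : lset := fun _ => False.

Definition disjoint (A B : lset) : Prop := forall l, A l -> B l -> False.
Definition subset (A B : lset) : Prop := forall l, A l -> B l.

Definition bigU (W : nat -> lset) (i j : nat) : lset :=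
  fun l => exists k, i <= k /\ k <= j /\ W k l.

Definition upd {X : Type} (s : nat -> X) (i : nat) (v : X) : nat -> X :=
  fun k => if Nat.eqb k i then v else s k.
Definition ins {X : Type} (s : nat -> X) (i : nat) (v : X) : nat -> X :=
  fun k => if Nat.ltb k i then s k else if Nat.eqb k i then v else s (k - 1).
Definition del {X : Type} (s : nat -> X) (i : nat) : nat -> X :=
  fun k => if Nat.ltb k i then s k else s (k + 1).

Inductive tag := Clean | Stale.

Record nbstate := NbState { nb_n : nat; nb_C : nat -> Code; nb_O : nat -> Output; nb_Sigma : store }.
Record instr := Instr { in_T : nat -> tag; in_R : nat -> lset; in_W : nat -> lset }.

Inductive op := Run (i : nat) | Edit (i : nat) (c : Code) | Insert (i : nat) (c : Code)
              | Delete (i : nat) | Move (s d : nat).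

(* Instrumented evaluation  c;Σ ⇓ o·Σ'·r·w  (a black box), with its specification:
   it refines standard evaluation, w contains every location where Σ' is updated
   from Σ, and r is the set of locations read: running in any store agreeing on r
   yields the same output, reads, writes and written values. *)
Definition ieval_type := Code -> store -> Output -> store -> lset -> lset -> Prop.
Definition eval_type := Code -> store -> Output -> store -> Prop.

Definition instrumented_eval (eval : eval_type) (ieval : ieval_type) : Prop :=
  (forall c S o S' r w, ieval c S o S' r w -> eval c S o S') /\
  (forall c S o S' r w, ieval c S o S' r w -> forall l, ~ w l -> S' l = S l) /\
  (forall c S1 o S1' r w S2, ieval c S1 o S1' r w ->
     (forall l, r l -> S1 l = S2 l) ->
     exists S2', ieval c S2 o S2' r w /\ (forall l, w l -> S2' l = S1' l)).

Definition rerun_consistent (n : nat) (R W : nat -> lset) (i : nat) : Prop :=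
  disjoint (R i) (W i) /\
  subset (R i) (bigU W 1 (i - 1)) /\
  disjoint (R i) (bigU W (i + 1) n) /\
  disjoint (W i) (bigU R 1 (i - 1)).

Definition ForwardStale (R W W' : nat -> lset) (i j : nat) : Prop :=
  j > i /\ exists l, (W i l \/ W' i l) /\ (R j l \/ W j l).

Definition is_LastWriter (W : nat -> lset) (i : nat) (l : Loc) (j : nat) : Prop :=
  1 <= j /\ j < i /\ W j l /\ (forall k, j < k -> k < i -> ~ W k l).

Definition BackwardStale (W W' : nat -> lset) (i j : nat) : Prop :=
  j < i /\ exists l, (W i l /\ ~ W' i l) /\ is_LastWriter W i l j.

Definition stale_update (T : nat -> tag) (R W W' : nat -> lset) (i : nat) (T' : nat -> tag) : Prop :=
  forall j,
    (j = i -> T' j = Clean) /\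
    (j <> i -> (ForwardStale R W W' i j \/ BackwardStale W W' i j) -> T' j = Stale) /\
    (j <> i -> ~ (ForwardStale R W W' i j \/ BackwardStale W W' i j) -> T' j = T j).

Definition stale_mark (T : nat -> tag) (R W W' : nat -> lset) (i : nat) (T' : nat -> tag) : Prop :=
  forall j,
    ((ForwardStale R W W' i j \/ BackwardStale W W' i j) -> T' j = Stale) /\
    (~ (ForwardStale R W W' i j \/ BackwardStale W W' i j) -> T' j = T j).

Inductive step (bot : Output) (ieval : ieval_type) :
    nbstate -> instr -> op -> nbstate -> instr -> Prop :=
| step_run : forall n C O Sg T R W i o Sg' r w T',
    1 <= i <= n ->
    ieval (C i) Sg o Sg' r w ->
    rerun_consistent n (upd R i r) (upd W i w) i ->
    stale_update T R W (upd W i w) i T' ->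
    step bot ieval (NbState n C O Sg) (Instr T R W) (Run i)
                   (NbState n C (upd O i o) Sg') (Instr T' (upd R i r) (upd W i w))
| step_edit : forall n C O Sg T R W i c,
    1 <= i <= n ->
    step bot ieval (NbState n C O Sg) (Instr T R W) (Edit i c)
                   (NbState n (upd C i c) O Sg) (Instr (upd T i Stale) R W)
| step_insert : forall n C O Sg T R W i c,
    1 <= i <= n + 1 ->
    step bot ieval (NbState n C O Sg) (Instr T R W) (Insert i c)
                   (NbState (n + 1) (ins C i c) (ins O i bot) Sg)
                   (Instr (ins T i Stale) (ins R i lempty) (ins W i lempty))
| step_delete : forall n C O Sg T R W i T'',
    1 <= i <= n ->
    stale_mark T R W (upd W i lempty) i T'' ->
    step bot ieval (NbState n C O Sg) (Instr T R W) (Delete i)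
                   (NbState (n - 1) (del C i) (del O i) Sg)
                   (Instr (del T'' i) (del (upd R i lempty) i) (del (upd W i lempty) i))
| step_move_down : forall S I s d S1 I1 S2 I2,
    s < d ->
    step bot ieval S I (Delete s) S1 I1 ->
    step bot ieval S1 I1 (Insert (d - 1) (nb_C S s)) S2 I2 ->
    step bot ieval S I (Move s d) S2 I2
| step_move_up : forall S I s d S1 I1 S2 I2,
    s > d ->
    step bot ieval S I (Delete s) S1 I1 ->
    step bot ieval S1 I1 (Insert d (nb_C S s)) S2 I2 ->
    step bot ieval S I (Move s d) S2 I2.

Definition well_formed (ieval : ieval_type) (S : nbstate) (I : instr) : Prop :=
  forall i, 1 <= i <= nb_n S -> in_T I i = Clean ->
    exists Sg', ieval (nb_C S i) (nb_Sigma S) (nb_O S i) Sg' (in_R I i) (in_W I i) /\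
      (forall l, ~ bigU (in_W I) (i + 1) (nb_n S) l -> nb_Sigma S l = Sg' l) /\
      rerun_consistent (nb_n S) (in_R I) (in_W I) i.

End Defs.

(* Well-formedness is a property of each clean cell separately.  Edit only
   marks a cell stale.  Inserting a stale cell with empty read and write sets
   merely renumbers the other cells, and every union of read/write sets that
   well-formedness mentions is unchanged by the renumbering; Delete is the
   clearing of the cell's read and write sets followed by the removal of such
   an empty stale cell.  Running (or clearing) cell i changes the store only
   on its new write set w.  A cell j that stays clean is neither forward nor
   backward stale: by rerun consistency at i, or by non-forward-staleness, j
   reads nothing in w, so re-running j in the new store reproduces it; and a
   location written by j can only lose its protection from later writers if i
   stopped writing a location whose last writer was j, which is backward
   staleness. *)

From Stdlib Require Import Arith Lia Classical FunctionalExtensionality.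
Set Implicit Arguments.

Ltac index_cases :=
  repeat match goal with
  | |- context [?a <? ?b] => destruct (Nat.ltb_spec a b)
  | |- context [?a =? ?b] => destruct (Nat.eqb_spec a b)
  end.

Lemma upd_eq {X : Type} (s : nat -> X) i v : upd s i v i = v.
Proof. unfold upd; index_cases; lia || reflexivity. Qed.

Lemma upd_neq {X : Type} (s : nat -> X) i v k : k <> i -> upd s i v k = s k.
Proof. intro Hk; unfold upd; index_cases; lia || reflexivity. Qed.

Lemma upd_id {X : Type} (s : nat -> X) i : upd s i (s i) = s.
Proof. extensionality k; unfold upd; index_cases; congruence. Qed.

Lemma upd_upd {X : Type} (s : nat -> X) i v v' : upd (upd s i v) i v' = upd s i v'.
Proof. extensionality k; unfold upd; index_cases; reflexivity. Qed.

Lemma ins_eq {X : Type} (s : nat -> X) i v : ins s i v i = v.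
Proof. unfold ins; index_cases; lia || reflexivity. Qed.

Lemma ins_del {X : Type} (s : nat -> X) i v : ins (del s i) i v = upd s i v.
Proof.
  extensionality k; unfold ins, del, upd; index_cases; try lia; try reflexivity.
  f_equal; lia.
Qed.

(* The position of old cell [j] after a cell is inserted at position [i]. *)
Definition bump (i j : nat) : nat := if j <? i then j else S j.

Lemma ins_bump {X : Type} (s : nat -> X) i v j : ins s i v (bump i j) = s j.
Proof. unfold ins, bump; index_cases; try lia; try reflexivity. f_equal; lia. Qed.

Lemma bump_surj i k : k <> i -> exists j, k = bump i j.
Proof.
  intro Hk; destruct (Nat.ltb_spec k i).
  - exists k; unfold bump; index_cases; lia.
  - exists (k - 1); unfold bump; index_cases; lia.
Qed.

Lemma bump_range i n j : 1 <= i <= n + 1 -> (1 <= bump i j <= n + 1 <-> 1 <= j <= n).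
Proof. intro Hi; unfold bump; index_cases; lia. Qed.

Lemma bump_range_above i n j k :
  i <= n + 1 -> (bump i j + 1 <= bump i k <= n + 1 <-> j + 1 <= k <= n).
Proof. intro Hi; unfold bump; index_cases; lia. Qed.

Lemma bump_range_below i j k :
  1 <= i -> (1 <= bump i k <= bump i j - 1 <-> 1 <= k <= j - 1).
Proof. intro Hi; unfold bump; index_cases; lia. Qed.

Lemma bigU_ins_lempty {Loc : Type} (X : nat -> lset Loc) i a b a' b' l :
  (forall k, a <= bump i k <= b <-> a' <= k <= b') ->
  bigU (ins X i (@lempty Loc)) a b l <-> bigU X a' b' l.
Proof.
  intro Hrange; split.
  - intros [k' [Ha [Hb Hk]]].
    destruct (Nat.eq_dec k' i) as [->|Hne].
    + rewrite ins_eq in Hk; destruct Hk.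
    + destruct (bump_surj Hne) as [k ->]; rewrite ins_bump in Hk.
      destruct (proj1 (Hrange k) (conj Ha Hb)); exists k; auto.
  - intros [k [Ha [Hb Hk]]].
    destruct (proj2 (Hrange k) (conj Ha Hb)).
    exists (bump i k); rewrite ins_bump; auto.
Qed.

Lemma bigU_upd_cases {Loc : Type} (X : nat -> lset Loc) i v a b l :
  bigU (upd X i v) a b l -> (a <= i <= b /\ v l) \/ bigU X a b l.
Proof.
  intros [k [Ha [Hb Hk]]]; destruct (Nat.eq_dec k i) as [->|Hne].
  - rewrite upd_eq in Hk; auto.
  - rewrite upd_neq in Hk by exact Hne; right; exists k; auto.
Qed.

Lemma rerun_consistent_ins {Loc : Type} n (R W : nat -> lset Loc) i j :
  1 <= i <= n + 1 ->
  rerun_consistent (n + 1) (ins R i (@lempty Loc)) (ins W i (@lempty Loc)) (bump i j)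
  <-> rerun_consistent n R W j.
Proof.
  intro Hi.
  assert (Habove : forall (X : nat -> lset Loc) l,
            bigU (ins X i (@lempty Loc)) (bump i j + 1) (n + 1) l <-> bigU X (j + 1) n l).
  { intros X l; apply bigU_ins_lempty; intro k; apply bump_range_above; lia. }
  assert (Hbelow : forall (X : nat -> lset Loc) l,
            bigU (ins X i (@lempty Loc)) 1 (bump i j - 1) l <-> bigU X 1 (j - 1) l).
  { intros X l; apply bigU_ins_lempty; intro k; apply bump_range_below; lia. }
  unfold rerun_consistent, disjoint, subset; rewrite !ins_bump.
  setoid_rewrite Habove; setoid_rewrite Hbelow; reflexivity.
Qed.

Lemma rerun_consistent_cleared {Loc : Type} n (R W : nat -> lset Loc) i :
  rerun_consistent n (upd R i (@lempty Loc)) (upd W i (@lempty Loc)) i.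
Proof. unfold rerun_consistent; rewrite !upd_eq; repeat split; intros l []. Qed.

Lemma rerun_consistent_write_disjoint {Loc : Type} n (R W : nat -> lset Loc) i r w j :
  rerun_consistent n (upd R i r) (upd W i w) i -> 1 <= j <= n -> j <> i ->
  (i < j -> disjoint r (W j)) /\ (j < i -> disjoint w (R j)).
Proof.
  intros [_ [_ [Hr_above Hw_below]]] Hj Hji; rewrite !upd_eq in *; split.
  - intros Hlt l Hr Hw; apply (Hr_above l Hr).
    exists j; rewrite upd_neq by exact Hji; repeat split; auto; lia.
  - intros Hlt l Hw Hr; apply (Hw_below l Hw).
    exists j; rewrite upd_neq by exact Hji; repeat split; auto; lia.
Qed.

Lemma clean_not_stale (P : Prop) (t t' : tag) :
  (P -> t' = Stale) -> (~ P -> t' = t) -> t' = Clean -> t = Clean /\ ~ P.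
Proof.
  intros Hstale Hkeep Ht'; destruct (classic P) as [HP|HP].
  - rewrite (Hstale HP) in Ht'; discriminate.
  - rewrite <- (Hkeep HP); auto.
Qed.

Section WellFormedness.

Variables (Code Output Loc Val : Type).
Variables (eval : eval_type Code Output Loc Val) (ieval : ieval_type Code Output Loc Val).
Hypothesis Hieval : instrumented_eval eval ieval.

Lemma ieval_frame c Sg o Sg' r w :
  ieval c Sg o Sg' r w -> forall l, ~ w l -> Sg' l = Sg l.
Proof. apply (proj1 (proj2 Hieval)). Qed.

Lemma ieval_reads_determine c Sg1 o Sg1' r w Sg2 :
  ieval c Sg1 o Sg1' r w -> (forall l, r l -> Sg1 l = Sg2 l) ->
  exists Sg2', ieval c Sg2 o Sg2' r w /\ (forall l, w l -> Sg2' l = Sg1' l).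
Proof. apply (proj2 (proj2 Hieval)). Qed.

(* The first run did not write its read set, so a second run sees the same
   reads and makes the same writes; the frame property covers the rest. *)
Lemma ieval_rerun_idempotent c Sg o Sg' r w :
  ieval c Sg o Sg' r w -> disjoint r w ->
  exists Sg'', ieval c Sg' o Sg'' r w /\ (forall l, Sg' l = Sg'' l).
Proof.
  intros Hev Hrw.
  assert (Hreads : forall l, r l -> Sg l = Sg' l).
  { intros l Hr; symmetry; apply (ieval_frame Hev); exact (Hrw l Hr). }
  destruct (ieval_reads_determine Sg' Hev Hreads) as [Sg'' [Hev' Hwrites]].
  exists Sg''; split; [exact Hev'|].
  intro l; destruct (classic (w l)) as [Hw|Hw].
  - symmetry; auto.
  - symmetry; exact (ieval_frame Hev' l Hw).
Qed.

Definition cell_consistent (n : nat) (c : Code) (o : Output) (Sg : store Loc Val)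
    (R W : nat -> lset Loc) (j : nat) : Prop :=
  exists Sg', ieval c Sg o Sg' (R j) (W j) /\
    (forall l, ~ bigU W (j + 1) n l -> Sg l = Sg' l) /\
    rerun_consistent n R W j.

Lemma well_formed_cells n C O Sg T R W :
  well_formed ieval (NbState n C O Sg) (Instr T R W) <->
  (forall j, 1 <= j <= n -> T j = Clean -> cell_consistent n (C j) (O j) Sg R W j).
Proof. reflexivity. Qed.

Lemma cell_consistent_ins n c o Sg (R W : nat -> lset Loc) i j :
  1 <= i <= n + 1 ->
  cell_consistent (n + 1) c o Sg (ins R i (@lempty Loc)) (ins W i (@lempty Loc)) (bump i j)
  <-> cell_consistent n c o Sg R W j.
Proof.
  intro Hi.
  assert (Habove : forall l,
            bigU (ins W i (@lempty Loc)) (bump i j + 1) (n + 1) l <-> bigU W (j + 1) n l).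
  { intro l; apply bigU_ins_lempty; intro k; apply bump_range_above; lia. }
  unfold cell_consistent; setoid_rewrite ins_bump; setoid_rewrite Habove.
  setoid_rewrite rerun_consistent_ins; [reflexivity|exact Hi].
Qed.

Lemma well_formed_ins n C O Sg T R W i c o :
  1 <= i <= n + 1 ->
  well_formed ieval (NbState (n + 1) (ins C i c) (ins O i o) Sg)
    (Instr (ins T i Stale) (ins R i (@lempty Loc)) (ins W i (@lempty Loc)))
  <-> well_formed ieval (NbState n C O Sg) (Instr T R W).
Proof.
  intro Hi; split; intro Hwf; apply well_formed_cells.
  - intros j Hj HT.
    apply cell_consistent_ins with (i := i); [exact Hi|].
    specialize (Hwf (bump i j)); cbn in Hwf.
    rewrite (ins_bump C), (ins_bump O), (ins_bump T) in Hwf.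
    apply Hwf; [apply bump_range|]; auto.
  - intros k Hk HT.
    destruct (Nat.eq_dec k i) as [->|Hne].
    + rewrite ins_eq in HT; discriminate.
    + destruct (bump_surj Hne) as [j ->]; rewrite !ins_bump in *.
      apply (bump_range _ _ Hi) in Hk.
      apply cell_consistent_ins; [exact Hi|]; exact (Hwf j Hk HT).
Qed.

Section AfterWrite.

Variables (n i j : nat) (R W : nat -> lset Loc) (r w : lset Loc).
Hypothesis Hi : i <= n.
Hypothesis Hj : 1 <= j <= n.
Hypothesis Hji : j <> i.
Hypothesis Hr_above : i < j -> disjoint r (W j).
Hypothesis Hw_below : j < i -> disjoint w (R j).
Hypothesis Hnot_stale :
  ~ (ForwardStale R W (upd W i w) i j \/ BackwardStale W (upd W i w) i j).

Lemma reads_avoid_write : disjoint (R j) w.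
Proof.
  intros l Hr Hw; destruct (proj1 (Nat.lt_gt_cases j i) Hji) as [Hlt|Hgt].
  - exact (Hw_below Hlt Hw Hr).
  - apply Hnot_stale; left; split; [exact Hgt|].
    exists l; rewrite upd_eq; auto.
Qed.

Lemma rerun_consistent_after_write :
  rerun_consistent n R W j -> rerun_consistent n (upd R i r) (upd W i w) j.
Proof.
  intros [Hrw [Hread_above [Hno_later Hno_earlier]]].
  unfold rerun_consistent; rewrite !upd_neq by exact Hji; repeat split.
  - exact Hrw.
  - intros l Hl; destruct (Hread_above l Hl) as [k [Hk1 [Hk2 Hk]]].
    exists k; repeat split; auto.
    destruct (Nat.eq_dec k i) as [->|Hki]; [|rewrite upd_neq; auto].
    exfalso; apply Hnot_stale; left; split; [lia|]; exists l; auto.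
  - intros l Hl Hb; destruct (bigU_upd_cases Hb) as [[Hrange Hw]|Hb'].
    + exact (Hw_below ltac:(lia) Hw Hl).
    + exact (Hno_later l Hl Hb').
  - intros l Hl Hb; destruct (bigU_upd_cases Hb) as [[Hrange Hr]|Hb'].
    + exact (Hr_above ltac:(lia) Hr Hl).
    + exact (Hno_earlier l Hl Hb').
Qed.

Lemma w_avoids_last_write l :
  W j l -> ~ bigU (upd W i w) (j + 1) n l -> ~ w l.
Proof.
  intros Hwj Hl Hw; destruct (proj1 (Nat.lt_gt_cases j i) Hji) as [Hlt|Hgt].
  - apply Hl; exists i; rewrite upd_eq; repeat split; auto; lia.
  - apply Hnot_stale; left; split; [exact Hgt|].
    exists l; rewrite upd_eq; auto.
Qed.

(* Were [i] the old writer of [l] after [j], dropping [l] from its write set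
   would make [j] backward stale. *)
Lemma last_write_stable l :
  W j l -> ~ bigU (upd W i w) (j + 1) n l -> ~ bigU W (j + 1) n l.
Proof.
  intros Hwj Hl [k [Hk1 [Hk2 Hk]]].
  destruct (Nat.eq_dec k i) as [->|Hki].
  - apply Hnot_stale; right; split; [lia|].
    exists l; split; [split; [exact Hk|rewrite upd_eq; exact (w_avoids_last_write Hwj Hl)]|].
    repeat split; auto; try lia.
    intros k' Hk'1 Hk'2 Hk'; apply Hl.
    exists k'; rewrite upd_neq by lia; repeat split; auto; lia.
  - apply Hl; exists k; rewrite upd_neq by exact Hki; auto.
Qed.

Lemma cell_consistent_after_write c o Sg Sg' :
  (forall l, ~ w l -> Sg' l = Sg l) ->
  cell_consistent n c o Sg R W j ->
  cell_consistent n c o Sg' (upd R i r) (upd W i w) j.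
Proof.
  intros Hframe [Sj [Hev [Hagree Hrc]]].
  assert (Hreads : forall l, R j l -> Sg l = Sg' l).
  { intros l Hr; symmetry; apply Hframe; exact (reads_avoid_write Hr). }
  destruct (ieval_reads_determine Sg' Hev Hreads) as [Sj' [Hev' Hwrites]].
  exists Sj'; rewrite !upd_neq by exact Hji.
  split; [exact Hev'|split; [|exact (rerun_consistent_after_write Hrc)]].
  intros l Hl; destruct (classic (W j l)) as [Hwj|Hwj].
  - rewrite Hwrites, Hframe by auto using w_avoids_last_write.
    exact (Hagree l (last_write_stable Hwj Hl)).
  - symmetry; exact (ieval_frame Hev' l Hwj).
Qed.

End AfterWrite.

Lemma cell_consistent_run_self n i c Sg o Sg' R W r w :
  ieval c Sg o Sg' r w -> rerun_consistent n (upd R i r) (upd W i w) i ->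
  cell_consistent n c o Sg' (upd R i r) (upd W i w) i.
Proof.
  intros Hev Hrc.
  destruct (ieval_rerun_idempotent Hev) as [Sg'' [Hev' Hsame]].
  { destruct Hrc as [Hrw _]; rewrite !upd_eq in Hrw; exact Hrw. }
  exists Sg''; rewrite !upd_eq; auto.
Qed.

Lemma well_formed_run n C O Sg T R W i o Sg' r w T' :
  1 <= i <= n ->
  ieval (C i) Sg o Sg' r w ->
  rerun_consistent n (upd R i r) (upd W i w) i ->
  stale_update T R W (upd W i w) i T' ->
  well_formed ieval (NbState n C O Sg) (Instr T R W) ->
  well_formed ieval (NbState n C (upd O i o) Sg') (Instr T' (upd R i r) (upd W i w)).
Proof.
  intros Hi Hev Hrc Hsu Hwf; apply well_formed_cells; intros j Hj HT.
  destruct (Nat.eq_dec j i) as [->|Hji].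
  - rewrite upd_eq; exact (cell_consistent_run_self Hev Hrc).
  - destruct (Hsu j) as [_ [Hstale Hkeep]].
    destruct (clean_not_stale (Hstale Hji) (Hkeep Hji) HT) as [HTj Hnot_stale].
    destruct (rerun_consistent_write_disjoint Hrc Hj Hji) as [Hr_above Hw_below].
    rewrite upd_neq by exact Hji.
    apply cell_consistent_after_write with (Sg := Sg); auto; try lia.
    + exact (ieval_frame Hev).
    + exact (Hwf j Hj HTj).
Qed.

Lemma well_formed_clear n C O Sg T R W i T'' :
  1 <= i <= n ->
  stale_mark T R W (upd W i (@lempty Loc)) i T'' ->
  well_formed ieval (NbState n C O Sg) (Instr T R W) ->
  well_formed ieval (NbState n C O Sg)
    (Instr (upd T'' i Stale) (upd R i (@lempty Loc)) (upd W i (@lempty Loc))).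
Proof.
  intros Hi Hsm Hwf; apply well_formed_cells; intros j Hj HT.
  destruct (Nat.eq_dec j i) as [->|Hji].
  - rewrite upd_eq in HT; discriminate.
  - rewrite upd_neq in HT by exact Hji.
    destruct (Hsm j) as [Hstale Hkeep].
    destruct (clean_not_stale Hstale Hkeep HT) as [HTj Hnot_stale].
    destruct (rerun_consistent_write_disjoint (rerun_consistent_cleared n R W i) Hj Hji)
      as [Hr_above Hw_below].
    apply cell_consistent_after_write with (Sg := Sg); auto; try lia.
    exact (Hwf j Hj HTj).
Qed.

Lemma well_formed_delete n C O Sg T R W i T'' :
  1 <= i <= n ->
  stale_mark T R W (upd W i (@lempty Loc)) i T'' ->
  well_formed ieval (NbState n C O Sg) (Instr T R W) ->
  well_formed ieval (NbState (n - 1) (del C i) (del O i) Sg)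
    (Instr (del T'' i) (del (upd R i (@lempty Loc)) i) (del (upd W i (@lempty Loc)) i)).
Proof.
  intros Hi Hsm Hwf.
  apply well_formed_ins with (i := i) (c := C i) (o := O i); [lia|].
  replace (n - 1 + 1) with n by lia.
  rewrite !ins_del, !upd_upd, !upd_id.
  exact (well_formed_clear Hi Hsm Hwf).
Qed.

Lemma well_formed_edit n C O Sg T R W i c :
  well_formed ieval (NbState n C O Sg) (Instr T R W) ->
  well_formed ieval (NbState n (upd C i c) O Sg) (Instr (upd T i Stale) R W).
Proof.
  rewrite !well_formed_cells; intros Hwf j Hj HT.
  destruct (Nat.eq_dec j i) as [->|Hji].
  - rewrite upd_eq in HT; discriminate.
  - rewrite !upd_neq in * by exact Hji; exact (Hwf j Hj HT).
Qed.

End WellFormedness.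

Theorem theorem1 (Code Output Loc Val : Type) (bot : Output)
    (eval : eval_type Code Output Loc Val) (ieval : ieval_type Code Output Loc Val)
    (Hieval : instrumented_eval eval ieval)
    (S S' : nbstate Code Output Loc Val) (I I' : instr Loc) (o : op Code) :
  well_formed ieval S I -> step bot ieval S I o S' I' -> well_formed ieval S' I'.
Proof.
  intros Hwf Hstep; revert Hwf.
  induction Hstep; intro Hwf.
  - eapply well_formed_run; eauto.
  - apply well_formed_edit; exact Hwf.
  - apply well_formed_ins; auto.
  - eapply well_formed_delete; eauto.
  - auto.
  - auto.
Qed.
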